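(* Let $z\in\mathbb{D}^*$ and suppose that there are points $p\in f\Lambda_z$ and $q\in g\Lambda_z$ with $|p-q|=\delta$. Then the closed $\delta/2$-neighbourhood $\{x\in\mathbb{C}:d(x,\Lambda_z)\le\delta/2\}$ of $\Lambda_z$ is path connected.
   Context: For $z\in\mathbb{D}^*=\{0<|z|<1\}$, $f(x)=zx$, $g(x)=z(x-1)+1$, $\Lambda_z$ is the unique nonempty compact subset of $\mathbb{C}$ with $\Lambda_z=f(\Lambda_z)\cup g(\Lambda_z)$, and $f\Lambda_z=f(\Lambda_z)$, $g\Lambda_z=g(\Lambda_z)$. *)

From HB Require Import structures.
From mathcomp Require Import all_boot all_order all_algebra.
From mathcomp Require Import all_classical all_reals all_analysis.
From mathcomp Require Import complex.
Import Order.TTheory GRing.Theory Num.Theory.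
Import numFieldNormedType.Exports.

Set Implicit Arguments.
Unset Strict Implicit.
Unset Printing Implicit Defensive.

Local Open Scope classical_set_scope.
Local Open Scope ring_scope.

Definition Cplx (R : realType) := ((R[i])^o)%type.

Definition cabs (R : realType) (x : Cplx R) : R := Normc.normc x.

Definition ifs_f (R : realType) (z : Cplx R) (x : Cplx R) : Cplx R := z * x.
Definition ifs_g (R : realType) (z : Cplx R) (x : Cplx R) : Cplx R :=
  z * (x - 1) + 1.

Definition dist_set (R : realType) (x : Cplx R) (A : set (Cplx R)) : R :=
  inf [set cabs (x - y) | y in A].

Definition path_connected (R : realType) (A : set (Cplx R)) : Prop :=
  forall x y, A x -> A y ->
  exists gamma : R -> Cplx R,
    {within `[0, 1]%classic, continuous gamma} /\
    gamma 0 = x /\ gamma 1 = y /\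
    (forall t, `[0, 1]%classic t -> A (gamma t)).

(* Paths from the fixed point 0 of f to the points of Lambda are obtained as
   the fixed point of a contraction acting on systems of paths.  Given paths
   F x from 0 to every x in Lambda, a new path to x is f o F (f^-1 x) when
   x lies in f(Lambda); otherwise it runs from 0 = f 0 to p along
   f o F (f^-1 p), crosses the segment [p, q], each point of which is within
   delta/2 of p or of q, returns from q to g 0 along g applied to the reversed
   path to g^-1 q, and ends with g o F (g^-1 x).  This operator sends systems
   inside the r-neighbourhood of Lambda to systems inside the
   max(|z| r, delta/2)-neighbourhood and shrinks the uniform distance between
   two systems by the factor |z|.  Iterating it from straight segments thus
   yields a uniformly convergent sequence whose limit consists of continuous
   paths inside the closed delta/2-neighbourhood.  Finally every point of
   that neighbourhood is joined by a segment to a nearest point of Lambda. *)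

From HB Require Import structures.
From mathcomp Require Import all_boot all_order all_algebra.
From mathcomp Require Import all_classical all_reals all_analysis.
From mathcomp Require Import complex.
From mathcomp Require Import lra ring.
Import Order.TTheory GRing.Theory Num.Theory.
Import numFieldNormedType.Exports.
Local Open Scope classical_set_scope.
Local Open Scope ring_scope.
Set Implicit Arguments.
Unset Strict Implicit.
Unset Printing Implicit Defensive.

Section Modulus.
Variable R : realType.
Local Notation Cx := (Cplx R).
Implicit Types a b w : Cx.

Lemma cabs_ge0 w : 0 <= cabs w.
Proof. by case: w => x y; rewrite /cabs /= sqrtr_ge0. Qed.

Lemma cabsM a b : cabs (a * b) = cabs a * cabs b.
Proof. exact: Normc.normcM. Qed.

Lemma cabsD a b : cabs (a + b) <= cabs a + cabs b.
Proof. exact: le_normcD. Qed.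

Lemma cabsN a : cabs (- a) = cabs a.
Proof. exact: normcN. Qed.

Lemma cabsB a b : cabs (a - b) = cabs (b - a).
Proof. by rewrite -cabsN opprB. Qed.

Lemma cabs0 : cabs (0 : Cx) = 0.
Proof. exact: Normc.normc0. Qed.

Lemma cabs_eq0 a : cabs a = 0 -> a = 0.
Proof. exact: Normc.eq0_normc. Qed.

Lemma cabs_lipschitz a b : `|cabs a - cabs b| <= cabs (a - b).
Proof.
have := cabsD (a - b) b; have := cabsD (b - a) a.
rewrite !subrK cabsB ler_norml => ? ?; apply/andP; split; lra.
Qed.

Lemma cabs_Re w : `|complex.Re (w : R[i])| <= cabs w.
Proof.
case: w => x y; rewrite /cabs /= -sqrtr_sqr ler_sqrt ?addr_ge0 ?sqr_ge0 //.
by rewrite lerDl sqr_ge0.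
Qed.

Lemma cabs_Im w : `|complex.Im (w : R[i])| <= cabs w.
Proof.
case: w => x y; rewrite /cabs /= -sqrtr_sqr ler_sqrt ?addr_ge0 ?sqr_ge0 //.
by rewrite lerDr sqr_ge0.
Qed.

Lemma cabs_le_ReIm w :
  cabs w <= `|complex.Re (w : R[i])| + `|complex.Im (w : R[i])|.
Proof.
case: w => x y; rewrite /cabs /=.
have sq : x ^+ 2 + y ^+ 2 <= (`|x| + `|y|) ^+ 2.
  rewrite sqrrD -(real_normK (num_real x)) -(real_normK (num_real y)).
  by rewrite -addrA lerD2l lerDr mulrn_wge0 // mulr_ge0.
by apply: le_trans (ler_wsqrtr sq) _; rewrite sqrtr_sqr ger0_norm // addr_ge0.
Qed.

Lemma ReB a b : complex.Re ((a - b : Cx) : R[i]) =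
  complex.Re (a : R[i]) - complex.Re (b : R[i]).
Proof. by case: a; case: b. Qed.

Lemma ImB a b : complex.Im ((a - b : Cx) : R[i]) =
  complex.Im (a : R[i]) - complex.Im (b : R[i]).
Proof. by case: a; case: b. Qed.

Lemma normE w : (`|w| : R[i]) = Complex (cabs w) 0.
Proof. by case: w => x y; rewrite normc_def. Qed.

Definition rC (t : R) : Cx := Complex t 0.

Lemma rCB (s t : R) : rC s - rC t = rC (s - t).
Proof. by apply/eqP; rewrite eq_complex /= subr0 !eqxx. Qed.

Lemma cabs_rC (t : R) : cabs (rC t) = `|t|.
Proof. by rewrite /cabs /= expr0n /= addr0 sqrtr_sqr. Qed.

Lemma cabs_rCM (t : R) w : 0 <= t -> cabs (rC t * w) = t * cabs w.
Proof. by move=> t0; rewrite cabsM cabs_rC ger0_norm. Qed.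

Lemma continuous_cabsB a : continuous (fun w : Cx => cabs (w - a)).
Proof.
move=> w; apply: (proj2 (@cvgrPdist_lt _ _ _ (nbhs w) _ _ _)) => e e0.
apply/nbhs_ballP.
exists (Complex e 0); first by rewrite /= ltcE /= eqxx e0.
move=> v; rewrite /ball /= normE ltcE /= => /andP[_ vw].
apply: le_lt_trans (cabs_lipschitz _ _) _.
by rewrite opprB addrA subrK.
Qed.

End Modulus.

Section Paths.
Variable R : realType.
Local Notation Cx := (Cplx R).
Implicit Types (a b c : Cx) (h k : R -> Cx) (B : set Cx).

(* Continuity for the modulus; the norm of [R[i]^o] is itself [R[i]]-valued. *)
Definition ccontinuous h := forall t0 e, 0 < e ->
  exists2 d, 0 < d & forall t, `|t - t0| < d -> cabs (h t - h t0) < e.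

Lemma ccontinuous_continuous h : ccontinuous h -> continuous h.
Proof.
move=> ch t0; apply/cvgrPdist_lt => e; rewrite ltcE /= => /andP[/eqP eI e0].
have [d d0 hd] := ch t0 _ e0; apply/nbhs_ballP; exists d => // t.
by rewrite /ball /= normE ltcE /= eI eqxx cabsB distrC => /hd.
Qed.

Lemma ccontinuous_cst c : ccontinuous (fun=> c).
Proof. by move=> t0 e e0; exists 1 => // t _; rewrite subrr cabs0. Qed.

Lemma ccontinuousD h k : ccontinuous h -> ccontinuous k ->
  ccontinuous (fun t => h t + k t).
Proof.
move=> ch ck t0 e e0; have e2 : 0 < e / 2 by rewrite divr_gt0.
have [d1 d10 h1] := ch t0 _ e2; have [d2 d20 h2] := ck t0 _ e2.
exists (Num.min d1 d2) => [|t]; first by rewrite lt_min d10 d20.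
rewrite lt_min => /andP[/h1 t1 /h2 t2].
rewrite opprD addrACA; apply: le_lt_trans (cabsD _ _) _; lra.
Qed.

Lemma ccontinuous_lipschitz (phi : Cx -> Cx) (l : R) h :
  (forall a b, cabs (phi a - phi b) <= l * cabs (a - b)) ->
  ccontinuous h -> ccontinuous (phi \o h).
Proof.
move=> phiL ch t0 e e0; have l1 : 0 < `|l| + 1 by have := normr_ge0 l; lra.
have [d d0 hd] := ch t0 _ (divr_gt0 e0 l1); exists d => // t /hd ht /=.
apply: le_lt_trans (phiL _ _) _; have := cabs_ge0 (h t - h t0) => g.
have lh : l * cabs (h t - h t0) <= `|l| * cabs (h t - h t0).
  by rewrite ler_wpM2r ?ler_norm.
have : `|l| * cabs (h t - h t0) <= `|l| * (e / (`|l| + 1)).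
  by rewrite ler_wpM2l // ltW.
have : `|l| * (e / (`|l| + 1)) < e.
  by rewrite mulrA ltr_pdivrMr // mulrDr mulr1; have := normr_ge0 l; nra.
lra.
Qed.

Lemma ccontinuous_reparam (phi : R -> R) (l : R) h : 0 < l ->
  (forall s t, `|phi s - phi t| <= l * `|s - t|) ->
  ccontinuous h -> ccontinuous (h \o phi).
Proof.
move=> l0 phiL ch t0 e e0; have [d d0 hd] := ch (phi t0) _ e0.
exists (d / l) => [|t td]; first by rewrite divr_gt0.
by apply: hd; apply: le_lt_trans (phiL _ _) _; rewrite -ltr_pdivlMl // mulrC.
Qed.

Lemma ccontinuous_rC c : ccontinuous (fun t => rC t * c).
Proof.
move=> t0 e e0; have c1 : 0 < cabs c + 1 by have := cabs_ge0 c; lra.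
exists (e / (cabs c + 1)) => [|t]; first by rewrite divr_gt0.
rewrite -mulrBl rCB cabsM cabs_rC ltr_pdivlMr // => te.
have := cabs_ge0 c; have := normr_ge0 (t - t0); nra.
Qed.

Lemma min_lipschitz (a b c : R) :
  `|Num.min a c - Num.min b c| <= `|a - b|.
Proof.
have := ler_norm (a - b); have := ler_norm (b - a); rewrite distrC => ? ?.
by case: (leP a c) => ?; case: (leP b c) => ?; rewrite ler_norml; apply/andP; split; lra.
Qed.

Lemma max_lipschitz (a b c : R) :
  `|Num.max a c - Num.max b c| <= `|a - b|.
Proof.
have := ler_norm (a - b); have := ler_norm (b - a); rewrite distrC => ? ?.
by case: (leP a c) => ?; case: (leP b c) => ?; rewrite ler_norml; apply/andP; split; lra.
Qed.

Lemma ccontinuous_uniform_limit h (hs : nat -> R -> Cx) :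
  (forall n, ccontinuous (hs n)) ->
  (forall e, 0 < e -> exists n, forall t, cabs (h t - hs n t) < e) ->
  ccontinuous h.
Proof.
move=> chs unif t0 e e0; have e3 : 0 < e / 3 by rewrite divr_gt0.
have [n hn] := unif _ e3; have [d d0 hd] := chs n t0 _ e3.
exists d => // t /hd ht; have := hn t; have := hn t0.
rewrite cabsB => h0 h1.
have -> : h t - h t0 = (h t - hs n t) + ((hs n t - hs n t0) + (hs n t0 - h t0)).
  by rewrite !addrA !subrK.
apply: le_lt_trans (cabsD _ _) _; have := cabsD (hs n t - hs n t0) (hs n t0 - h t0).
lra.
Qed.

(* Runs through [h] and then [k], provided [h 1 = k 0]; the min/max form makes
   continuity immediate. *)
Definition concat h k (t : R) : Cx :=
  h (Num.min (2 * t) 1) + k (Num.max (2 * t - 1) 0) - h 1.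

Lemma concat_l h k t : h 1 = k 0 -> t <= 1 / 2 -> concat h k t = h (2 * t).
Proof.
move=> hk t2; rewrite /concat hk.
have -> : Num.min (2 * t) 1 = 2 * t by apply/min_idPl; lra.
have -> : Num.max (2 * t - 1) 0 = 0 by apply/max_idPr; lra.
by rewrite addrK.
Qed.

Lemma concat_r h k t : 1 / 2 <= t -> concat h k t = k (2 * t - 1).
Proof.
move=> t2; rewrite /concat.
have -> : Num.min (2 * t) 1 = 1 by apply/min_idPr; lra.
have -> : Num.max (2 * t - 1) 0 = 2 * t - 1 by apply/max_idPl; lra.
by rewrite addrC addKr.
Qed.

Lemma concat1 h k : concat h k 1 = k 1.
Proof. by rewrite concat_r ?mulr1; [congr k; lra | lra]. Qed.

Lemma ccontinuous_concat h k :
  ccontinuous h -> ccontinuous k -> ccontinuous (concat h k).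
Proof.
move=> ch ck; apply: ccontinuousD; last exact: ccontinuous_cst.
apply: ccontinuousD.
- apply: (ccontinuous_reparam (l := 2)) ch => // s t.
  by apply: le_trans (min_lipschitz _ _ _) _; rewrite -mulrBr normrM ger0_norm.
- apply: (ccontinuous_reparam (l := 2)) ck => // s t.
  apply: le_trans (max_lipschitz _ _ _) _.
  by rewrite opprB addrA subrK -mulrBr normrM ger0_norm.
Qed.

Definition rev_path h (t : R) : Cx := h (1 - t).

Lemma ccontinuous_rev h : ccontinuous h -> ccontinuous (rev_path h).
Proof.
apply: (ccontinuous_reparam (l := 1)) => // s t.
have -> : 1 - s - (1 - t) = t - s by ring.
by rewrite mul1r distrC.
Qed.

Definition seg a b (t : R) : Cx := a + rC t * (b - a).

Lemma seg0 a b : seg a b 0 = a.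
Proof. by rewrite /seg (_ : rC 0 = 0) // mul0r addr0. Qed.

Lemma seg1 a b : seg a b 1 = b.
Proof. by rewrite /seg (_ : rC 1 = 1) // mul1r addrC subrK. Qed.

Lemma seg_sub a b c (t : R) :
  seg a b t - c = rC (1 - t) * (a - c) + rC t * (b - c).
Proof. by rewrite -rCB (_ : rC 1 = 1) // /seg; ring. Qed.

Lemma ccontinuous_seg a b : ccontinuous (seg a b).
Proof.
apply: (ccontinuous_lipschitz (l := 1) (phi := +%R a)); last exact: ccontinuous_rC.
by move=> u v; rewrite mul1r opprD addrACA subrr add0r.
Qed.

Definition is_path B h a b := [/\ ccontinuous h, h 0 = a, h 1 = b &
  forall t, 0 <= t <= 1 -> B (h t)].

Lemma is_path_concat B h k a b c :
  is_path B h a b -> is_path B k b c -> is_path B (concat h k) a c.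
Proof.
move=> [ch h0 h1 hB] [ck k0 k1 kB]; have hk : h 1 = k 0 by rewrite h1 k0.
split; first exact: ccontinuous_concat.
- by rewrite concat_l // mulr0.
- by rewrite concat1.
move=> t /andP[t0 t1]; case: (lerP t (1 / 2)) => t2.
  by rewrite concat_l //; apply: hB; apply/andP; split; lra.
by rewrite concat_r ?(ltW t2) //; apply: kB; apply/andP; split; lra.
Qed.

Lemma is_path_rev B h a b : is_path B h a b -> is_path B (rev_path h) b a.
Proof.
move=> [ch h0 h1 hB]; split; first exact: ccontinuous_rev.
- by rewrite /rev_path subr0.
- by rewrite /rev_path subrr.
by move=> t /andP[t0 t1]; apply: hB; apply/andP; split; lra.
Qed.

Lemma is_path_sub B B' h a b : B `<=` B' -> is_path B h a b -> is_path B' h a b.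
Proof. by move=> BB' [ch h0 h1 hB]; split => // t /hB /BB'. Qed.

Lemma is_path_comp B B' (phi : Cx -> Cx) (l : R) h a b :
  (forall u v, cabs (phi u - phi v) <= l * cabs (u - v)) ->
  (forall w, B w -> B' (phi w)) ->
  is_path B h a b -> is_path B' (phi \o h) (phi a) (phi b).
Proof.
move=> phiL BB' [ch h0 h1 hB]; split => /=; [|by rewrite h0|by rewrite h1|].
  exact: ccontinuous_lipschitz phiL ch.
by move=> t /hB /BB'.
Qed.

Lemma path_connected_of_hub B c :
  (forall x, B x -> exists h, is_path B h c x) -> path_connected B.
Proof.
move=> hub x y /hub[h hx] /hub[k ky].
have [cg g0 g1 gB] := is_path_concat (is_path_rev hx) ky.
exists (concat (rev_path h) k); split; last by split=> // t; rewrite /= in_itv; apply: gB.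
exact/continuous_subspaceT/ccontinuous_continuous.
Qed.

Definition close_on (M : R) h k := forall t, 0 <= t <= 1 -> cabs (h t - k t) <= M.

Lemma close_on_concat M h h' k k' : h 1 = h' 0 -> k 1 = k' 0 ->
  close_on M h k -> close_on M h' k' -> close_on M (concat h h') (concat k k').
Proof.
move=> hh kk hk hk' t /andP[t0 t1]; case: (lerP t (1 / 2)) => t2.
  by rewrite !concat_l //; apply: hk; apply/andP; split; lra.
by rewrite !concat_r ?(ltW t2) //; apply: hk'; apply/andP; split; lra.
Qed.

Lemma close_on_rev M h k : close_on M h k -> close_on M (rev_path h) (rev_path k).
Proof. by move=> hk t /andP[t0 t1]; apply: hk; apply/andP; split; lra. Qed.

Lemma close_on_comp M (phi : Cx -> Cx) (l : R) h k : 0 <= l ->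
  (forall u v, cabs (phi u - phi v) <= l * cabs (u - v)) ->
  close_on M h k -> close_on (l * M) (phi \o h) (phi \o k).
Proof.
by move=> l0 phiL hk t /hk hkt; apply: le_trans (phiL _ _) _; rewrite ler_wpM2l.
Qed.

Lemma close_on_refl M h : 0 <= M -> close_on M h h.
Proof. by move=> M0 t _; rewrite subrr cabs0. Qed.

Definition clamp (t : R) : R := Num.min (Num.max t 0) 1.

Lemma clamp01 t : 0 <= clamp t <= 1.
Proof.
rewrite /clamp; case: (leP t 0) => ?; [case: (leP (0 : R) 1) | case: (leP t 1)] => ?;
  apply/andP; split; lra.
Qed.

Lemma clamp_id t : 0 <= t <= 1 -> clamp t = t.
Proof. by move=> /andP[t0 t1]; rewrite /clamp (max_idPl t0); apply/min_idPl. Qed.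

Lemma clamp_lipschitz s t : `|clamp s - clamp t| <= 1 * `|s - t|.
Proof. by rewrite mul1r; apply: le_trans (min_lipschitz _ _ _) (max_lipschitz _ _ _). Qed.

End Paths.

Section ClosedNbhd.
Variable R : realType.
Local Notation Cx := (Cplx R).
Variable A : set Cx.
Implicit Types (r : R) (a b c w : Cx).

(* [dist_set w A <= r] without infima, see [closed_nbhdE]. *)
Definition closed_nbhd r : set Cx :=
  [set w | forall e, 0 < e -> exists2 y, A y & cabs (w - y) <= r + e].

Lemma closed_nbhd_le r r' : r <= r' -> closed_nbhd r `<=` closed_nbhd r'.
Proof. by move=> rr' w wA e /wA[y Ay wy]; exists y => //; lra. Qed.

Lemma closed_nbhd_of_pt r w y : A y -> cabs (w - y) <= r -> closed_nbhd r w.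
Proof. by move=> Ay wy e e0; exists y => //; lra. Qed.

Lemma closed_nbhd_shift r w w' :
  closed_nbhd r w' -> closed_nbhd (r + cabs (w - w')) w.
Proof.
move=> w'A e /w'A[y Ay w'y]; exists y => //.
by have := cabsD (w - w') (w' - y); rewrite addrA subrK; lra.
Qed.

Lemma closed_nbhd_inf r w :
  (forall e, 0 < e -> closed_nbhd (r + e) w) -> closed_nbhd r w.
Proof.
move=> wA e e0; have e2 : 0 < e / 2 by rewrite divr_gt0.
by have [y Ay wy] := wA _ e2 _ e2; exists y => //; lra.
Qed.

Lemma closed_nbhd_image (phi : Cx -> Cx) (l : R) r w : 0 < l ->
  (forall y, A y -> A (phi y)) ->
  (forall u v, cabs (phi u - phi v) <= l * cabs (u - v)) ->
  closed_nbhd r w -> closed_nbhd (l * r) (phi w).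
Proof.
move=> l0 phiA phiL wA e e0; have [y Ay wy] := wA _ (divr_gt0 e0 l0).
exists (phi y); first exact: phiA.
apply: le_trans (phiL _ _) _; apply: le_trans (ler_wpM2l (ltW l0) wy) _.
by rewrite mulrDr mulrCA divff ?mulr1 // gt_eqF.
Qed.

Lemma closed_nbhd_bounded (K : R) r w : (forall y, A y -> cabs y <= K) ->
  closed_nbhd r w -> cabs w <= K + r.
Proof.
move=> AK wA; apply/ler_addgt0Pr => e /wA[y /AK yK wy].
by have := cabsD (w - y) y; rewrite subrK; lra.
Qed.

Lemma closed_nbhdE r : A !=set0 -> closed_nbhd r = [set x | dist_set x A <= r].
Proof.
move=> [a0 Aa0]; set S := fun x => [set cabs (x - y) | y in A].
have S_lb x : lbound (S x) 0 by move=> _ [y _ <-]; exact: cabs_ge0.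
apply/seteqP; split => x /= xA.
  apply/ler_addgt0Pr => e /xA[y Ay xy]; apply: le_trans xy.
  by apply: ge_inf; [exists 0; exact: S_lb | exists y].
move=> e e0; have [_ [y Ay <-] ye] : exists2 d, S x d & d < inf (S x) + e.
  by apply: inf_adherent => //; split; [exists (cabs (x - a0)), a0 | exists 0].
by exists y => //; rewrite /dist_set in xA; lra.
Qed.

Lemma closed_nbhd_nearest r x : compact A -> closed_nbhd r x ->
  exists2 y, A y & cabs (x - y) <= r.
Proof.
move=> cA xA; have [a0 Aa0 _] := xA 1 ltr01.
have cont := continuous_subspaceT (A := A) (continuous_cabsB (a := x)).
have [y /set_mem Ay ymin] := compact_EVT_min (ex_intro _ a0 Aa0) cA cont.
exists y => //; rewrite cabsB; apply/ler_addgt0Pr => e /xA[v Av xv].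
by apply: le_trans (ymin _ (mem_set Av)) _; rewrite cabsB.
Qed.

Lemma compact_cabs_bounded : compact A -> A !=set0 ->
  exists K, forall y, A y -> cabs y <= K.
Proof.
move=> cA A0; have cont := continuous_subspaceT (A := A) (continuous_cabsB (a := 0)).
have [c _ cmax] := compact_EVT_max A0 cA cont.
by exists (cabs c) => y Ay; have := cmax y (mem_set Ay); rewrite !subr0.
Qed.

Lemma is_path_seg_ball r a b c : A c -> cabs (a - c) <= r -> cabs (b - c) <= r ->
  is_path (closed_nbhd r) (seg a b) a b.
Proof.
move=> Ac ac bc; split; [exact: ccontinuous_seg|exact: seg0|exact: seg1|].
move=> t /andP[t0 t1]; apply: (closed_nbhd_of_pt Ac).
rewrite seg_sub; apply: le_trans (cabsD _ _) _.
rewrite !cabs_rCM ?subr_ge0 //; nra.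
Qed.

Lemma is_path_seg_mid a b : A a -> A b ->
  is_path (closed_nbhd (cabs (a - b) / 2)) (seg a b) a b.
Proof.
move=> Aa Ab; split; [exact: ccontinuous_seg|exact: seg0|exact: seg1|].
have := cabs_ge0 (a - b) => ab0.
move=> t /andP[t0 t1]; case: (lerP t (1 / 2)) => t2.
  apply: (closed_nbhd_of_pt Aa).
  by rewrite seg_sub subrr mulr0 add0r cabs_rCM // cabsB; nra.
apply: (closed_nbhd_of_pt Ab).
by rewrite seg_sub subrr mulr0 addr0 cabs_rCM ?subr_ge0 //; nra.
Qed.

Lemma path_connected_closed_nbhd r c : compact A ->
  (forall y, A y -> exists h, is_path (closed_nbhd r) h c y) ->
  path_connected (closed_nbhd r).
Proof.
move=> cA hub; apply: (@path_connected_of_hub _ _ c) => x.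
move=> /(closed_nbhd_nearest cA)[y Ay xy].
have [h hy] := hub y Ay; exists (concat h (seg y x)).
apply: is_path_concat hy (is_path_seg_ball Ay _ xy).
by rewrite subrr cabs0; apply: le_trans xy; exact: cabs_ge0.
Qed.

End ClosedNbhd.

Section GeometricLimits.
Variable R : realType.
Local Notation Cx := (Cplx R).
Variable q : R.
Hypotheses (q_ge0 : 0 <= q) (q_lt1 : q < 1).

Lemma exists_geometric_lt (D e : R) : 0 <= D -> 0 < e -> exists n, D * q ^+ n < e.
Proof.
move=> D0 e0; have D1 : 0 < D + 1 by lra.
have /cvg_expr /cvgrPdist_lt /(_ _ (divr_gt0 e0 D1)) [N _ hN] : `|q| < 1.
  by rewrite ger0_norm.
exists N; have := hN N (leqnn N); rewrite /= sub0r normrN ger0_norm ?exprn_ge0 //.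
rewrite ltr_pdivlMr // => qN; have : 0 <= q ^+ N by exact: exprn_ge0.
nra.
Qed.

Lemma le0_of_geometric (c D : R) : 0 <= D -> (forall n, c <= D * q ^+ n) -> c <= 0.
Proof.
move=> D0 cD; apply/ler_addgt0Pr => e /(exists_geometric_lt D0)[n Dn].
by have := cD n; lra.
Qed.

Lemma geometric_cauchy (u : nat -> Cx) (M : R) :
  (forall n, cabs (u n.+1 - u n) <= M * q ^+ n) ->
  forall n m, (n <= m)%N -> cabs (u m - u n) <= M / (1 - q) * q ^+ n.
Proof.
move=> step n m /subnKC <-; set C := M / (1 - q).
have M0 : 0 <= M.
  by have := step 0%N; rewrite expr0 mulr1; apply: le_trans; exact: cabs_ge0.
have C0 : 0 <= C by rewrite divr_ge0 // subr_ge0 ltW.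
suff sub k : cabs (u (n + k)%N - u n) <= C * (q ^+ n - q ^+ (n + k)).
  by apply: le_trans (sub _) _; rewrite ler_wpM2l // lerBlDr lerDl exprn_ge0.
elim: k => [|k IH]; first by rewrite addn0 !subrr cabs0 mulr0.
have -> : u (n + k.+1)%N - u n = (u (n + k).+1 - u (n + k)%N) + (u (n + k)%N - u n).
  by rewrite addnS addrA subrK.
apply: le_trans (cabsD _ _) _; apply: le_trans (lerD (step _) IH) _.
rewrite addnS exprS /C le_eqVlt; apply/orP; left; apply/eqP; field.
by rewrite subr_eq0 gt_eqF.
Qed.

(* If [|a m - a n| <= C q^n] whenever [n <= m], the limit of [a] is the
   supremum of its lower bounds [a n - C q^n]. *)
Definition rlim (C : R) (a : nat -> R) : R := sup [set a n - C * q ^+ n | n in setT].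

Lemma rlimP (C : R) (a : nat -> R) : 0 <= C ->
  (forall n m, (n <= m)%N -> `|a m - a n| <= C * q ^+ n) ->
  forall n, `|rlim C a - a n| <= C * q ^+ n.
Proof.
move=> C0 aC; set S := [set a n - C * q ^+ n | n in setT].
have ub n m : a n - C * q ^+ n <= a m + C * q ^+ m.
  have := mulr_ge0 C0 (exprn_ge0 n q_ge0); have := mulr_ge0 C0 (exprn_ge0 m q_ge0).
  by case: (leqP n m) => [/aC|/ltnW/aC]; rewrite ler_norml => /andP[? ?]; lra.
have S0 : S !=set0 by exists (a 0%N - C * q ^+ 0), 0%N.
have ubS m : ubound S (a m + C * q ^+ m) by move=> _ [k _ <-]; exact: ub.
move=> n; have := ge_sup S0 (ubS n).
have : a n - C * q ^+ n <= sup S.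
  by apply: sup_upper_bound; [split; [|exists (a 0%N + C * q ^+ 0)]|exists n].
by rewrite /rlim -/S ler_norml => ? ?; apply/andP; split; lra.
Qed.

Definition climit (C : R) (u : nat -> Cx) : Cx :=
  Complex (rlim C (fun n => complex.Re (u n : R[i])))
          (rlim C (fun n => complex.Im (u n : R[i]))).

Lemma climitP (C : R) (u : nat -> Cx) : 0 <= C ->
  (forall n m, (n <= m)%N -> cabs (u m - u n) <= C * q ^+ n) ->
  forall n, cabs (climit C u - u n) <= 2 * C * q ^+ n.
Proof.
move=> C0 uC n; apply: le_trans (cabs_le_ReIm _) _.
have -> : 2 * C * q ^+ n = C * q ^+ n + C * q ^+ n by ring.
rewrite ReB ImB; apply: lerD; apply: rlimP => // k m /uC; apply: le_trans.
- by rewrite -ReB; exact: cabs_Re.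
- by rewrite -ImB; exact: cabs_Im.
Qed.

End GeometricLimits.

Section Attractor.
Variable R : realType.
Local Notation Cx := (Cplx R).
Variables (z : Cx) (L : set Cx) (p q : Cx) (K : R).
Hypotheses (z_gt0 : 0 < cabs z) (z_lt1 : cabs z < 1).
Hypothesis L_eq : L = ifs_f z @` L `|` ifs_g z @` L.
Hypotheses (p_fL : (ifs_f z @` L) p) (q_gL : (ifs_g z @` L) q).
Hypothesis L_le : forall y, L y -> cabs y <= K.

Local Notation qz := (cabs z).
Local Notation delta := (cabs (p - q)).
Local Notation nbhd := (closed_nbhd L).
Implicit Types (a b x : Cx) (F G : Cx -> R -> Cx).

Lemma z_neq0 : z != 0.
Proof. by apply: contraTneq z_gt0 => ->; rewrite cabs0 ltxx. Qed.

Definition ifs_finv x := x / z.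
Definition ifs_ginv x := (x - 1) / z + 1.

Lemma ifs_finvK x : ifs_f z (ifs_finv x) = x.
Proof. by rewrite /ifs_f mulrC divfK // z_neq0. Qed.

Lemma ifs_ginvK x : ifs_g z (ifs_ginv x) = x.
Proof. by rewrite /ifs_g addrK mulrC divfK ?z_neq0 // subrK. Qed.

Lemma ifs_fK x : ifs_finv (ifs_f z x) = x.
Proof. by rewrite /ifs_finv /ifs_f mulrC mulKf // z_neq0. Qed.

Lemma ifs_gK x : ifs_ginv (ifs_g z x) = x.
Proof. by rewrite /ifs_ginv /ifs_g addrK mulrC mulKf ?z_neq0 // subrK. Qed.

Lemma ifs_f0 : ifs_f z 0 = 0.
Proof. by rewrite /ifs_f mulr0. Qed.

Lemma ifs_f_lipschitz a b : cabs (ifs_f z a - ifs_f z b) <= qz * cabs (a - b).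
Proof. by rewrite /ifs_f -mulrBr cabsM. Qed.

Lemma ifs_g_lipschitz a b : cabs (ifs_g z a - ifs_g z b) <= qz * cabs (a - b).
Proof. by rewrite /ifs_g (_ : _ - _ = z * (a - b)) ?cabsM //; ring. Qed.

Lemma ifs_f_L x : L x -> L (ifs_f z x).
Proof. by move=> Lx; rewrite L_eq; left; exists x. Qed.

Lemma ifs_g_L x : L x -> L (ifs_g z x).
Proof. by move=> Lx; rewrite L_eq; right; exists x. Qed.

Lemma L_ifs_inv x : L x -> L (ifs_finv x) \/ L (ifs_ginv x).
Proof.
rewrite {1}L_eq => -[[y Ly <-]|[y Ly <-]].
  by left; rewrite ifs_fK.
by right; rewrite ifs_gK.
Qed.

Lemma L_finv_p : L (ifs_finv p).
Proof. by case: p_fL => y Ly <-; rewrite ifs_fK. Qed.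

Lemma L_ginv_q : L (ifs_ginv q).
Proof. by case: q_gL => y Ly <-; rewrite ifs_gK. Qed.

Lemma L_p : L p.
Proof. by rewrite -(ifs_finvK p); exact/ifs_f_L/L_finv_p. Qed.

Lemma L_q : L q.
Proof. by rewrite -(ifs_ginvK q); exact/ifs_g_L/L_ginv_q. Qed.

Lemma K_ge0 : 0 <= K.
Proof. exact: le_trans (cabs_ge0 p) (L_le L_p). Qed.

Lemma is_path_ifs_f r h a b : is_path (nbhd r) h a b ->
  is_path (nbhd (qz * r)) (ifs_f z \o h) (ifs_f z a) (ifs_f z b).
Proof.
apply: is_path_comp ifs_f_lipschitz _ => w.
exact: closed_nbhd_image z_gt0 ifs_f_L ifs_f_lipschitz.
Qed.

Lemma is_path_ifs_g r h a b : is_path (nbhd r) h a b ->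
  is_path (nbhd (qz * r)) (ifs_g z \o h) (ifs_g z a) (ifs_g z b).
Proof.
apply: is_path_comp ifs_g_lipschitz _ => w.
exact: closed_nbhd_image z_gt0 ifs_g_L ifs_g_lipschitz.
Qed.

Definition path_system (r : R) F := forall x, L x -> is_path (nbhd r) (F x) 0 x.

Definition bridge F : R -> Cx :=
  concat (concat (ifs_f z \o F (ifs_finv p)) (seg p q))
         (ifs_g z \o rev_path (F (ifs_ginv q))).

Definition lift F x : R -> Cx :=
  if `[< L (ifs_finv x) >] then ifs_f z \o F (ifs_finv x)
  else concat (bridge F) (ifs_g z \o F (ifs_ginv x)).

Lemma is_path_bridge_ends r F : path_system r F ->
  is_path (nbhd (qz * r)) (ifs_f z \o F (ifs_finv p)) 0 p /\
  is_path (nbhd (qz * r)) (ifs_g z \o rev_path (F (ifs_ginv q))) q (ifs_g z 0).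
Proof.
move=> PF; split.
  by have := is_path_ifs_f (PF _ L_finv_p); rewrite ifs_f0 ifs_finvK.
by have := is_path_ifs_g (is_path_rev (PF _ L_ginv_q)); rewrite ifs_ginvK.
Qed.

Lemma bridge1 r F : path_system r F -> bridge F 1 = ifs_g z 0.
Proof. by move=> /is_path_bridge_ends[_ [_ _ P31 _]]; rewrite /bridge concat1. Qed.

Lemma is_path_bridge r r' F : path_system r F -> qz * r <= r' -> delta / 2 <= r' ->
  is_path (nbhd r') (bridge F) 0 (ifs_g z 0).
Proof.
move=> /is_path_bridge_ends[P1 P3] /(closed_nbhd_le (A := L)) rr'.
move=> /(closed_nbhd_le (A := L)) dr'.
rewrite /bridge; apply: is_path_concat (is_path_sub rr' P3).
exact: is_path_concat (is_path_sub rr' P1) (is_path_sub dr' (is_path_seg_mid L_p L_q)).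
Qed.

Lemma path_system_lift r r' F : path_system r F -> qz * r <= r' -> delta / 2 <= r' ->
  path_system r' (lift F).
Proof.
move=> PF rr' dr' x Lx; rewrite /lift; case: asboolP => [Lfx|nLfx].
  have := is_path_ifs_f (PF _ Lfx); rewrite ifs_f0 ifs_finvK.
  exact: is_path_sub (closed_nbhd_le rr').
have Lgx : L (ifs_ginv x) by case: (L_ifs_inv Lx).
apply: is_path_concat (is_path_bridge PF rr' dr') _.
have := is_path_ifs_g (PF _ Lgx); rewrite ifs_ginvK.
exact: is_path_sub (closed_nbhd_le rr').
Qed.

Definition paths_close (M : R) F G := forall x, L x -> close_on M (F x) (G x).

Lemma close_on_bridge r r' (M : R) F G : path_system r F -> path_system r' G ->
  0 <= M -> paths_close M F G -> close_on (qz * M) (bridge F) (bridge G).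
Proof.
move=> /is_path_bridge_ends[[_ _ f1 _] [_ g0 _ _]].
move=> /is_path_bridge_ends[[_ _ f1' _] [_ g0' _ _]] M0 FG.
have qM : 0 <= qz * M by rewrite mulr_ge0 ?cabs_ge0.
apply: close_on_concat; [by rewrite concat1 seg1 g0|by rewrite concat1 seg1 g0'| |].
  apply: close_on_concat; [by rewrite f1 seg0|by rewrite f1' seg0| |exact: close_on_refl].
  exact: close_on_comp (cabs_ge0 z) ifs_f_lipschitz (FG _ L_finv_p).
exact/(close_on_comp (cabs_ge0 z) ifs_g_lipschitz)/close_on_rev/FG/L_ginv_q.
Qed.

Lemma lift_contract r r' (M : R) F G : path_system r F -> path_system r' G ->
  0 <= M -> paths_close M F G -> paths_close (qz * M) (lift F) (lift G).
Proof.
move=> PF PG M0 FG x Lx; rewrite /lift; case: asboolP => [Lfx|nLfx].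
  exact: close_on_comp (cabs_ge0 z) ifs_f_lipschitz (FG _ Lfx).
have Lgx : L (ifs_ginv x) by case: (L_ifs_inv Lx).
have [[_ g0 _ _] [_ g0' _ _]] := (PF _ Lgx, PG _ Lgx).
apply: close_on_concat (close_on_bridge PF PG M0 FG) _.
- by rewrite (bridge1 PF) /= g0.
- by rewrite (bridge1 PG) /= g0'.
exact: close_on_comp (cabs_ge0 z) ifs_g_lipschitz (FG _ Lgx).
Qed.

Definition lifts n : Cx -> R -> Cx := iter n lift (fun x => seg 0 x).

Lemma path_system_lifts n : path_system (delta / 2 + qz ^+ n * K) (lifts n).
Proof.
have d0 : 0 <= delta / 2 by rewrite divr_ge0 ?cabs_ge0.
elim: n => [|n IH].
  move=> x Lx; rewrite expr0 mul1r; apply: (is_path_seg_ball Lx).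
    by rewrite sub0r cabsN; have := L_le Lx; lra.
  by rewrite subrr cabs0; have := K_ge0; lra.
apply: path_system_lift IH _ _.
  by rewrite exprS -mulrA mulrDr lerD2r ler_piMl // ltW.
by rewrite lerDl mulr_ge0 ?exprn_ge0 ?cabs_ge0 ?K_ge0.
Qed.

Let M0 := 2 * (K + (delta / 2 + K)).

Lemma lifts_close n : paths_close (M0 * qz ^+ n) (lifts n.+1) (lifts n).
Proof.
have M0_ge0 : 0 <= M0 by rewrite /M0; have := K_ge0; have := cabs_ge0 (p - q); lra.
elim: n => [|n IH].
  move=> x Lx t tt; rewrite expr0 mulr1.
  have [_ _ _ /(_ t tt) /(closed_nbhd_bounded L_le) h1] := path_system_lifts 1 Lx.
  have [_ _ _ /(_ t tt) /(closed_nbhd_bounded L_le) h0] := path_system_lifts 0 Lx.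
  apply: le_trans (cabsD _ _) _; rewrite cabsN /M0.
  have : qz ^+ 1 * K <= K by rewrite expr1 ler_piMl ?K_ge0 // ltW.
  rewrite expr0 mul1r in h0; lra.
rewrite exprS mulrCA; apply: lift_contract IH.
- exact: path_system_lifts.
- exact: path_system_lifts.
by rewrite mulr_ge0 ?exprn_ge0 ?cabs_ge0.
Qed.

Let C := M0 / (1 - qz).

Lemma C_ge0 : 0 <= C.
Proof.
rewrite divr_ge0 ?subr_ge0 ?(ltW z_lt1) // /M0.
by have := K_ge0; have := cabs_ge0 (p - q); lra.
Qed.

Definition limit_paths x t : Cx := climit qz C (fun n => lifts n x t).

Lemma limit_paths_approx x t n : L x -> 0 <= t <= 1 ->
  cabs (limit_paths x t - lifts n x t) <= 2 * C * qz ^+ n.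
Proof.
move=> Lx tt.
have := geometric_cauchy (cabs_ge0 z) z_lt1 (fun k => lifts_close k Lx tt).
by rewrite -/C => /(climitP (cabs_ge0 z) C_ge0); apply.
Qed.

Lemma is_path_limit x : L x ->
  is_path (nbhd (delta / 2)) (limit_paths x \o @clamp R) 0 x.
Proof.
move=> Lx; set D := 2 * C.
have D0 : 0 <= D by rewrite mulr_ge0 ?C_ge0.
have approx n t : cabs (limit_paths x (clamp t) - lifts n x (clamp t)) <= D * qz ^+ n.
  by rewrite /D -mulrA mulrA; apply: limit_paths_approx Lx (clamp01 t).
have const t v : 0 <= t <= 1 -> (forall n, lifts n x t = v) ->
    limit_paths x (clamp t) = v.
  move=> tt ev; apply/eqP; rewrite -subr_eq0; apply/eqP/cabs_eq0/le_anti.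
  rewrite cabs_ge0 andbT; apply: (le0_of_geometric (cabs_ge0 z) z_lt1 D0) => n.
  by have := approx n t; rewrite (clamp_id tt) ev.
split.
- apply: (ccontinuous_uniform_limit (hs := fun n => lifts n x \o @clamp R)).
    move=> n; have [cn _ _ _] := path_system_lifts n Lx.
    apply: ccontinuous_reparam cn; [exact: ltr01|exact: clamp_lipschitz].
  move=> e /(exists_geometric_lt (cabs_ge0 z) z_lt1 D0)[n Dn].
  by exists n => t; apply: le_lt_trans (approx n t) Dn.
- by apply: const => [|n]; [rewrite lexx ler01|have [] := path_system_lifts n Lx].
- by apply: const => [|n]; [rewrite lexx ler01|have [] := path_system_lifts n Lx].
move=> t tt; rewrite /= (clamp_id tt); apply: closed_nbhd_inf => e e0.
have DK : 0 <= D + K by have := K_ge0; lra.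
have [n Dn] := exists_geometric_lt (cabs_ge0 z) z_lt1 DK e0.
have [_ _ _ /(_ t tt) /closed_nbhd_shift nb] := path_system_lifts n Lx.
apply: closed_nbhd_le (nb (limit_paths x t)).
by have := approx n t; rewrite (clamp_id tt); lra.
Qed.

End Attractor.

Theorem lemma5p2p2 (R : realType) (z : Cplx R) (Lambda : set (Cplx R))
    (p q : Cplx R) (delta : R) :
  0 < cabs z < 1 ->
  compact Lambda -> Lambda !=set0 ->
  Lambda = (ifs_f z) @` Lambda `|` (ifs_g z) @` Lambda ->
  ((ifs_f z) @` Lambda) p -> ((ifs_g z) @` Lambda) q ->
  cabs (p - q) = delta ->
  path_connected [set x : Cplx R | dist_set x Lambda <= delta / 2].
Proof.
move=> /andP[z_gt0 z_lt1] cL L0 L_eq p_fL q_gL <-.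
have [K L_le] := compact_cabs_bounded cL L0.
rewrite -closed_nbhdE //; apply: (path_connected_closed_nbhd (c := 0) cL) => x Lx.
exists (limit_paths z Lambda p q K x \o @clamp R).
exact (is_path_limit z_gt0 z_lt1 L_eq p_fL q_gL L_le Lx).
Qed.
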